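(* Let $k\ge 0$ and let $P_{4k+2}$ be the path with vertices labeled $1,2,\dots,4k+2$ consecutively. Then $\tau(P_{4k+2})=(k+1)^2$, and for each vertex $v$, writing $v=4q+r$ with $0\le r<4$, $$TDV(v)=\begin{cases}(k+1)q & \text{if } v\equiv 0 \pmod 4,\\ (k+1)(q+1) & \text{if } v\equiv 1 \pmod 4,\\ (k+1)(k+1-q) & \text{if } v\equiv 2 \pmod 4,\\ (k+1)(k-q) & \text{if } v\equiv 3 \pmod 4.\end{cases}$$
   Context: A set $D \subseteq V(G)$ is a total dominating set of a graph $G$ if every vertex of $G$ has a neighbor in $D$. $\gamma_t(G)$ is the minimum cardinality of a total dominating set; a minimum one is a $\gamma_t(G)$-set. $\tau(G)$ is the number of $\gamma_t(G)$-sets and $TDV(v)$ is the number of $\gamma_t(P_{4k+2})$-sets containing $v$. *)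

From mathcomp Require Import all_boot.
Set Implicit Arguments. Unset Strict Implicit. Unset Printing Implicit Defensive.

Definition is_tds (T : finType) (e : rel T) (D : {set T}) : bool :=
  [forall v : T, [exists u in D, e v u]].

(* gamma_t(G): minimum cardinality of a total dominating set
   (defaults to #|T| if none exists, which never happens for the paths used). *)
Definition gamma_t (T : finType) (e : rel T) : nat :=
  \big[minn/#|T|]_(D : {set T} | is_tds e D) #|D|.

Definition is_gamma_t_set (T : finType) (e : rel T) (D : {set T}) : bool :=
  is_tds e D && (#|D| == gamma_t e).

Definition tau (T : finType) (e : rel T) : nat :=
  #|[set D : {set T} | is_gamma_t_set e D]|.

Definition TDV (T : finType) (e : rel T) (v : T) : nat :=
  #|[set D : {set T} | is_gamma_t_set e D & v \in D]|.

(* The path P_n on vertex type 'I_n; the vertex i : 'I_n carries label i+1,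
   so labels run over 1..n consecutively. *)
Definition path_adj (n : nat) : rel 'I_n :=
  fun i j => (i.+1 == j :> nat) || (j.+1 == i :> nat).

(* In a path, a vertex of one parity is dominated only by vertices of the other
   parity, so a total dominating set D of P_(4k+2) (vertices 0, ..., 4k+1) splits
   into two independent halves.  The even half x_j = [2j \in D], 0 <= j <= 2k,
   must meet every gap {2j, 2j+2} and contain 4k (to dominate 4k+1); the odd half,
   read from the right as y_j = [4k+1-2j \in D], obeys the same condition.  Such a
   "chain cover" of 0..2m has at least m+1 elements (one in each pair {2t, 2t+1}
   and 2m), and the covers of size exactly m+1 are the m+1 switch patterns
   (odd positions below 2a, even positions from 2a on).  Hence gamma_t = 2k+2,
   the gamma_t-sets are indexed by pairs of patterns, and TDV(v) is k+1 times the
   number of patterns containing the half-position of v. *)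

From mathcomp Require Import all_boot all_order zify.
Set Implicit Arguments. Unset Strict Implicit. Unset Printing Implicit Defensive.

Import Order.TTheory.

Lemma gamma_t_witness (T : finType) (e : rel T) (D0 : {set T}) :
  is_tds e D0 -> (forall D, is_tds e D -> #|D0| <= #|D|) -> gamma_t e = #|D0|.
Proof.
move=> tdsD0 minD0; apply/eqP; rewrite eqn_leq -!leEnat /gamma_t -minEnat.
by rewrite bigmin_le_cond //=; apply/bigmin_geP; split; [exact: max_card | exact: minD0].
Qed.

Section NatMembership.

Variable n : nat.

Definition memn (D : {set 'I_n}) (i : nat) : bool := [exists u in D, val u == i].

Lemma memn_ord (D : {set 'I_n}) (u : 'I_n) : memn D u = (u \in D).
Proof.
apply/existsP/idP => [[w /andP[Dw /eqP/val_inj <-]] // | Du].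
by exists u; rewrite Du eqxx.
Qed.

Lemma memn_out (D : {set 'I_n}) i : n <= i -> memn D i = false.
Proof. by move=> le_n_i; apply/existsP => -[w /andP[_ /eqP /= wi]]; have := ltn_ord w; lia. Qed.

Lemma memn_set (P : pred nat) i : memn [set u : 'I_n | P u] i = (i < n) && P i.
Proof.
case: (ltnP i n) => [lt_i_n | le_n_i]; last exact: memn_out.
by rewrite -[i]/(val (Ordinal lt_i_n)) memn_ord inE.
Qed.

Lemma card_memn (D : {set 'I_n}) : #|D| = \sum_(0 <= i < n) memn D i.
Proof.
rewrite big_mkord -sum1_card big_mkcond /=; apply: eq_bigr => i _.
by rewrite memn_ord; case: (i \in D).
Qed.

Lemma card_ord_pred (P : pred nat) : #|[set a : 'I_n | P a]| = \sum_(0 <= a < n) P a.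
Proof. by rewrite card_memn; apply: eq_big_nat => i /andP[_ lt_i_n]; rewrite memn_set lt_i_n. Qed.

Lemma path_tdsP (D : {set 'I_n}) : is_tds (@path_adj n) D <->
  (forall i, i < n -> (0 < i) && memn D i.-1 || memn D i.+1).
Proof.
split=> [/forallP tdsD i lt_i_n | dom].
  have /existsP[u /andP[Du]] := tdsD (Ordinal lt_i_n).
  rewrite /path_adj /= => /orP[/eqP -> | /eqP <-].
    by rewrite memn_ord Du orbT.
  by rewrite memn_ord Du.
apply/forallP => v; have /orP[/andP[v_gt0] | ] := dom v (ltn_ord v).
  case/existsP=> u /andP[Du /eqP /= uv]; apply/existsP; exists u.
  by rewrite Du /path_adj; apply/orP; right; apply/eqP; lia.
case/existsP=> u /andP[Du /eqP /= uv]; apply/existsP; exists u.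
by rewrite Du /path_adj uv eqxx.
Qed.

End NatMembership.

Definition chain_cover (l : nat) (x : pred nat) : Prop :=
  (forall j, j < l -> x j || x j.+1) /\ x l.

(* The minimum cover that, in each pair {2t, 2t+1}, picks 2t+1 for t < a and 2t
   for t >= a. *)
Definition switch_cover (a j : nat) : bool := if odd j then j./2 < a else a <= j./2.

Lemma eq_chain_cover l (x y : pred nat) :
  (forall j, j <= l -> x j = y j) -> chain_cover l x -> chain_cover l y.
Proof.
move=> exy [cover last]; split; last by rewrite -exy.
by move=> j lt_j_l; rewrite -!exy ?cover //; lia.
Qed.

Lemma chain_cover_behead l (x : pred nat) :
  chain_cover l.+2 x -> chain_cover l (fun j => x j.+2).
Proof. by case=> cover last; split=> // j lt_j_l; apply: cover; lia. Qed.

Lemma switch_coverSS a j : switch_cover a j.+2 = switch_cover a.-1 j.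
Proof. by rewrite /switch_cover /= negbK; case: odd; lia. Qed.

Lemma chain_cover_switch a m : a <= m -> chain_cover m.*2 (switch_cover a).
Proof.
move=> le_a_m; split=> [j _ | ]; rewrite /switch_cover /=.
  by rewrite uphalf_half; case: odd => /=; lia.
by rewrite odd_double doubleK.
Qed.

Lemma sum_chain_cover m (x : pred nat) :
  chain_cover m.*2 x -> m < \sum_(0 <= j < m.*2.+1) x j.
Proof.
elim: m x => [|m IHm] x cover; first by case: cover => _ /= x0; rewrite big_nat1 x0.
have tail_gt := IHm _ (chain_cover_behead cover).
have x01 : x 0 || x 1 by case: cover => c _; apply: c; lia.
rewrite doubleS big_nat_recl // big_nat_recl //; lia.
Qed.

Lemma sum_switch_cover a m : a <= m -> \sum_(0 <= j < m.*2.+1) switch_cover a j = m.+1.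
Proof.
elim: m a => [|m IHm] a le_a_m; first by rewrite big_nat1 /switch_cover /=; lia.
rewrite doubleS big_nat_recl // big_nat_recl //.
under eq_big_nat => j _ do rewrite switch_coverSS.
by rewrite IHm; [rewrite /switch_cover /=; lia | lia].
Qed.

Lemma min_chain_cover m (x : pred nat) :
  chain_cover m.*2 x -> \sum_(0 <= j < m.*2.+1) x j = m.+1 ->
  exists2 a, a <= m & forall j, j <= m.*2 -> x j = switch_cover a j.
Proof.
elim: m x => [|m IHm] x cover.
  by case: cover => _ x0 _; exists 0 => // -[|j] //= _; rewrite x0.
have tail_gt := sum_chain_cover (chain_cover_behead cover).
have [x01 x12] : x 0 || x 1 /\ x 1 || x 2 by case: cover => c _; split; apply: c; lia.
rewrite doubleS big_nat_recl // big_nat_recl // => sum_x.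
have [a' le_a'_m tailE] := IHm _ (chain_cover_behead cover) ltac:(lia).
have x0_a'0 : x 0 -> a' = 0.
  move=> x0; have x1F : x 1 = false by move: sum_x tail_gt; rewrite x0; case: (x 1); lia.
  by move: x12 (tailE 0 (leq0n _)); rewrite x1F /= => -> /=; rewrite /switch_cover /=; lia.
exists (if x 0 then 0 else a'.+1); first by case: (x 0); lia.
case=> [|[|j]] le_j_m; last first.
- rewrite tailE ?switch_coverSS; last lia.
  by case: (boolP (x 0)) => [/x0_a'0 -> | _].
- by rewrite /switch_cover /=; case: (x 0) x01 sum_x tail_gt; lia.
- by rewrite /switch_cover /=; case: (x 0).
Qed.

Lemma switch_cover_inj m a b : a <= m -> b <= m ->
  (forall j, j <= m.*2 -> switch_cover a j = switch_cover b j) -> a = b.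
Proof.
move=> le_a_m le_b_m eq_ab; have := eq_ab a.*2; have := eq_ab b.*2.
by rewrite /switch_cover !odd_double !doubleK; lia.
Qed.

Lemma sum_switch_cover_at N j : \sum_(0 <= a < N) switch_cover a j =
  if odd j then N - (j./2).+1 else minn N (j./2).+1.
Proof.
elim: N => [|N IHN]; first by rewrite big_geq //; case: odd.
by rewrite big_nat_recr //= IHN /switch_cover; case: odd; lia.
Qed.

Lemma sum_nat_double (F : nat -> nat) N :
  \sum_(0 <= i < N.*2) F i = \sum_(0 <= j < N) F j.*2 + \sum_(0 <= j < N) F j.*2.+1.
Proof.
elim: N => [|N IHN]; first by rewrite !big_geq.
by rewrite doubleS !big_nat_recr //= IHN; lia.
Qed.

Section PathOfOrder4kPlus2.

Variable k : nat.

Local Notation path := (@path_adj (4 * k + 2)).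

Definition evens (D : {set 'I_(4 * k + 2)}) : pred nat := fun j => memn D j.*2.

(* Read from the right, so that both halves satisfy the same chain condition. *)
Definition odds (D : {set 'I_(4 * k + 2)}) : pred nat := fun j => memn D (4 * k + 1 - j.*2).

Lemma card_evens_odds (D : {set 'I_(4 * k + 2)}) :
  #|D| = \sum_(0 <= j < k.*2.+1) evens D j + \sum_(0 <= j < k.*2.+1) odds D j.
Proof.
rewrite card_memn /evens /odds; move: (memn D) => F.
rewrite (_ : 4 * k + 2 = k.*2.+1.*2) ?sum_nat_double; last lia.
congr (_ + _); rewrite big_nat_rev.
by apply: eq_big_nat => j /andP[_ lt_j]; congr F; lia.
Qed.

Lemma tds_evens_odds (D : {set 'I_(4 * k + 2)}) :
  is_tds path D <-> chain_cover k.*2 (evens D) /\ chain_cover k.*2 (odds D).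
Proof.
rewrite path_tdsP; split=> [dom | [[ecover elast] [ocover olast]] i lt_i].
  split; split.
  - move=> j lt_j; have := dom j.*2.+1 ltac:(lia).
    by rewrite /evens /= doubleS.
  - have := dom (4 * k + 1) ltac:(lia).
    rewrite [memn D (4 * k + 1).+1]memn_out ?orbF; last lia.
    by rewrite /evens (_ : (4 * k + 1).-1 = k.*2.*2) //; lia.
  - move=> j lt_j; have := dom (4 * k - j.*2) ltac:(lia).
    rewrite /odds (_ : 0 < 4 * k - j.*2) /=; last lia.
    rewrite orbC (_ : (4 * k - j.*2).+1 = 4 * k + 1 - j.*2); last lia.
    by rewrite (_ : (4 * k - j.*2).-1 = 4 * k + 1 - j.+1.*2) //; lia.
  - by have := dom 0 ltac:(lia); rewrite /odds (_ : 4 * k + 1 - k.*2.*2 = 1) //; lia.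
have [j [ei | ei]] : exists j, i = j.*2 \/ i = j.*2.+1 by exists i./2; lia.
  subst i; case: j => [|j] in lt_i *.
    by move: olast; rewrite /odds (_ : 4 * k + 1 - k.*2.*2 = 1) //; lia.
  have := ocover (k.*2 - j.+1) ltac:(lia); rewrite /odds /=.
  rewrite (_ : 4 * k + 1 - (k.*2 - j.+1).*2 = j.+1.*2.+1); last lia.
  by rewrite (_ : 4 * k + 1 - (k.*2 - j.+1).+1.*2 = j.*2.+1) 1?orbC //; lia.
subst i; have [lt_j | ge_j] := ltnP j k.*2.
  by have := ecover j lt_j; rewrite /evens /= doubleS.
by move: elast; rewrite /evens (_ : k.*2 = j) /=; lia.
Qed.

(* The position of vertex i in its half, as indexed by [evens] and [odds]. *)
Definition half_index (i : nat) : nat := if odd i then (4 * k + 1 - i)./2 else i./2.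

Definition in_min_tds (p : 'I_k.+1 * 'I_k.+1) (i : nat) : bool :=
  switch_cover (if odd i then p.2 else p.1) (half_index i).

Definition min_tds (p : 'I_k.+1 * 'I_k.+1) : {set 'I_(4 * k + 2)} :=
  [set u : 'I_(4 * k + 2) | in_min_tds p u].

Lemma evens_min_tds p j : j <= k.*2 -> evens (min_tds p) j = switch_cover p.1 j.
Proof.
move=> le_j; rewrite /evens memn_set /in_min_tds /half_index odd_double doubleK.
by rewrite (_ : j.*2 < 4 * k + 2) //; lia.
Qed.

Lemma odds_min_tds p j : j <= k.*2 -> odds (min_tds p) j = switch_cover p.2 j.
Proof.
move=> le_j; rewrite /odds memn_set /in_min_tds /half_index.
have -> : odd (4 * k + 1 - j.*2) by lia.
have -> : (4 * k + 1 - (4 * k + 1 - j.*2))./2 = j by lia.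
by rewrite (_ : _ < _) //; lia.
Qed.

Lemma eq_min_tds (D : {set 'I_(4 * k + 2)}) (p : 'I_k.+1 * 'I_k.+1) :
  (forall j, j <= k.*2 -> evens D j = switch_cover p.1 j /\ odds D j = switch_cover p.2 j) ->
  D = min_tds p.
Proof.
move=> halvesD; apply/setP => u; rewrite inE -memn_ord /in_min_tds /half_index.
have := ltn_ord u.
have [j [-> | ->]] : exists j, nat_of_ord u = j.*2 \/ nat_of_ord u = j.*2.+1
  by exists u./2; lia.
  by rewrite odd_double doubleK => lt_u; case: (halvesD j _) => [|<- _ //]; lia.
move=> lt_u; rewrite /= odd_double /=.
rewrite (_ : (4 * k + 1 - j.*2.+1)./2 = k.*2 - j); last lia.
case: (halvesD (k.*2 - j) _) => [|_ <-]; first lia.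
by rewrite /odds (_ : 4 * k + 1 - _ = j.*2.+1) //; lia.
Qed.

Lemma is_tds_min_tds p : is_tds path (min_tds p).
Proof.
apply/tds_evens_odds; split.
  by apply: eq_chain_cover (chain_cover_switch (leq_ord _)) => j le_j; rewrite evens_min_tds.
by apply: eq_chain_cover (chain_cover_switch (leq_ord _)) => j le_j; rewrite odds_min_tds.
Qed.

Lemma card_min_tds p : #|min_tds p| = k.*2.+2.
Proof.
rewrite card_evens_odds.
have -> : \sum_(0 <= j < k.*2.+1) evens (min_tds p) j = k.+1.
  rewrite -(sum_switch_cover (leq_ord p.1)).
  by apply: eq_big_nat => j /andP[_ lt_j]; rewrite evens_min_tds.
have -> : \sum_(0 <= j < k.*2.+1) odds (min_tds p) j = k.+1.
  rewrite -(sum_switch_cover (leq_ord p.2)).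
  by apply: eq_big_nat => j /andP[_ lt_j]; rewrite odds_min_tds.
lia.
Qed.

Lemma card_tds_ge (D : {set 'I_(4 * k + 2)}) : is_tds path D -> k.*2.+2 <= #|D|.
Proof.
case/tds_evens_odds => /sum_chain_cover evens_gt /sum_chain_cover odds_gt.
by rewrite card_evens_odds; lia.
Qed.

Lemma gamma_t_path : gamma_t path = k.*2.+2.
Proof.
rewrite -(card_min_tds (ord0, ord0)); apply: gamma_t_witness; first exact: is_tds_min_tds.
by move=> D; rewrite card_min_tds; apply: card_tds_ge.
Qed.

Lemma gamma_t_setP (D : {set 'I_(4 * k + 2)}) :
  reflect (exists p, D = min_tds p) (is_gamma_t_set path D).
Proof.
rewrite /is_gamma_t_set gamma_t_path; apply: (iffP andP) => [[tdsD /eqP cardD] | [p ->]].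
  have [ecover ocover] := (tds_evens_odds D).1 tdsD.
  have := sum_chain_cover ecover; have := sum_chain_cover ocover.
  have := card_evens_odds D; rewrite cardD => sumD odds_gt evens_gt.
  have [a le_a evensE] := min_chain_cover ecover ltac:(lia).
  have [b le_b oddsE] := min_chain_cover ocover ltac:(lia).
  exists (inord a, inord b); apply: eq_min_tds => j le_j.
  by rewrite /= !inordK ?evensE ?oddsE; lia.
by rewrite is_tds_min_tds card_min_tds.
Qed.

Lemma min_tds_inj : injective min_tds.
Proof.
move=> [a b] [a' b'] eq_ab; congr pair; apply: val_inj;
  apply: (switch_cover_inj (leq_ord _) (leq_ord _)) => j le_j.
  by rewrite -(evens_min_tds (a, b)) // eq_ab evens_min_tds.
by rewrite -(odds_min_tds (a, b)) // eq_ab odds_min_tds.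
Qed.

Lemma card_gamma_t_sets (P : pred {set 'I_(4 * k + 2)}) :
  #|[set D | is_gamma_t_set path D & P D]| = #|[set p | P (min_tds p)]|.
Proof.
rewrite -(card_imset _ min_tds_inj); apply: eq_card => D; rewrite inE.
apply/andP/imsetP => [[/gamma_t_setP[p ->] PD] | [p Pp ->]]; first by exists p; rewrite ?inE.
by split; [apply/gamma_t_setP; exists p | rewrite inE in Pp].
Qed.

Lemma tau_path : tau path = k.+1 ^ 2.
Proof.
rewrite /tau (eq_card (B := [set D | is_gamma_t_set path D & true])); last first.
  by move=> D; rewrite !inE andbT.
by rewrite card_gamma_t_sets cardsT card_prod card_ord.
Qed.

Lemma TDV_path (v : 'I_(4 * k + 2)) :
  TDV path v = k.+1 * \sum_(0 <= a < k.+1) switch_cover a (half_index v).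
Proof.
rewrite /TDV card_gamma_t_sets -card_ord_pred.
case: (boolP (odd v)) => odd_v.
  rewrite (_ : [set p | _] = setX setT [set a : 'I_k.+1 | switch_cover a (half_index v)]).
    by rewrite cardsX cardsT card_ord.
  by apply/setP => -[a b]; rewrite !inE /in_min_tds odd_v.
rewrite (_ : [set p | _] = setX [set a : 'I_k.+1 | switch_cover a (half_index v)] setT).
  by rewrite cardsX cardsT card_ord mulnC.
by apply/setP => -[a b]; rewrite !inE /in_min_tds (negbTE odd_v) andbT.
Qed.

End PathOfOrder4kPlus2.

Theorem proposition5p4 (k : nat) :
  tau (@path_adj (4 * k + 2)) = (k + 1) ^ 2 /\
  forall v : 'I_(4 * k + 2),
    let lab := (nat_of_ord v).+1 in
    let q := lab %/ 4 in
    TDV (@path_adj (4 * k + 2)) v =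
      match lab %% 4 with
      | 0 => (k + 1) * q
      | 1 => (k + 1) * (q + 1)
      | 2 => (k + 1) * (k + 1 - q)
      | _ => (k + 1) * (k - q)
      end.
Proof.
split=> [|v /=]; first by rewrite tau_path addn1.
rewrite TDV_path sum_switch_cover_at addn1 /half_index.
move: (nat_of_ord v) (ltn_ord v) => w lt_w.
case E: (w.+1 %% 4) => [|[|[|r]]]; congr (_ * _);
  by case: (boolP (odd w)) => odd_w; case: (boolP (odd _)) => odd_j; lia.
Qed.
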